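(* Let $X$ be a metric space, $\mathscr{F}\in\mathrm{IFS}_k(X)$, and let $B\subset X$ be an open set with $X=\overline{\mathcal{O}^+_{\mathscr{F}}(B)}=\mathcal{O}^-_{\mathscr{F}}(B)$. Suppose there are maps $\{h_i\}_{i\geq1}\subset\langle\mathscr{F}\rangle^+$ such that $B\subset\bigcup_{i=1}^\infty h_i(B)$ and $\lim_{n\to\infty}\mathrm{diam}(h_{i_1}\circ\dots\circ h_{i_n}(B))=0$ for every sequence $(i_n)_{n\geq1}$ of positive integers with $h_{i_1}\circ\dots\circ h_{i_n}(B)\cap B\neq\emptyset$ for all $n$. Then $\mathscr{F}$ is minimal.
   Context: $\mathrm{IFS}_k(X)$ is the set of families of $k$ locally Lipschitz homeomorphisms of $X$ (up to reordering). $\langle\mathscr{F}\rangle^+$ is the semigroup of finite compositions of elements of $\mathscr{F}$. $\mathcal{O}^+_{\mathscr{F}}(A)=\{h(x):h\in\langle\mathscr{F}\rangle^+,x\in A\}$, $\mathcal{O}^-_{\mathscr{F}}(A)=\{h^{-1}(x):h\in\langle\mathscr{F}\rangle^+,x\in A\}$. $\mathscr{F}$ is minimal if $\mathcal{O}^+_{\mathscr{F}}(\{x\})$ is dense for every $x\in X$. *)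

From HB Require Import structures.
From mathcomp Require Import all_boot all_order all_algebra.
From mathcomp Require Import all_classical all_reals all_analysis.
Set Implicit Arguments. Unset Strict Implicit. Unset Printing Implicit Defensive.
Import Order.TTheory GRing.Theory Num.Theory.
Local Open Scope classical_set_scope.
Local Open Scope ring_scope.

Section IFSDefs.
Context {R : realType} {X : metricType R}.

Definition locally_lipschitz (f : X -> X) : Prop :=
  forall x : X, exists2 U : set X, nbhs x U &
    exists L : R, forall y z, U y -> U z -> mdist (f y) (f z) <= L * mdist y z.

Definition homeomorphism (f : X -> X) : Prop :=
  exists g : X -> X, [/\ cancel f g, cancel g f, continuous f & continuous g].

Definition is_IFS (k : nat) (F : 'I_k -> X -> X) : Prop :=
  forall i, locally_lipschitz (F i) /\ homeomorphism (F i).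

Definition compw (k : nat) (F : 'I_k -> X -> X) (w : seq 'I_k) : X -> X :=
  foldr (fun i g => F i \o g) id w.

Definition semigroup (k : nat) (F : 'I_k -> X -> X) : set (X -> X) :=
  [set h | exists2 w : seq 'I_k, w != [::] & h = compw F w].

Definition orbit_plus (k : nat) (F : 'I_k -> X -> X) (A : set X) : set X :=
  [set y | exists h, semigroup F h /\ exists2 x, A x & y = h x].

(* { h^{-1}(x) : h in <F>^+, x in A }; h is a bijection so h^{-1}(x) is the
   unique y with h y = x *)
Definition orbit_minus (k : nat) (F : 'I_k -> X -> X) (A : set X) : set X :=
  [set y | exists h, semigroup F h /\ exists2 x, A x & h y = x].

Definition minimal (k : nat) (F : 'I_k -> X -> X) : Prop :=
  forall x : X, closure (orbit_plus F [set x]) = setT.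

Definition diam (A : set X) : \bar R :=
  ereal_sup [set (mdist x y)%:E | x in A & y in A].

Definition hcomp (h : nat -> X -> X) (s : nat -> nat) (n : nat) : X -> X :=
  foldr (fun j g => h (s j) \o g) id (iota 0 n).

End IFSDefs.

From HB Require Import structures.
From mathcomp Require Import all_boot all_order all_algebra.
From mathcomp Require Import all_classical all_reals all_analysis.
Import Order.TTheory GRing.Theory Num.Theory.
Local Open Scope classical_set_scope.
Local Open Scope ring_scope.

(* Fix x in X and a nonempty open set V; we find an element of the orbit
   of x in V.  Since the forward orbit of B is dense, some f in <F>^+ and
   b in B satisfy f b in V, and by continuity of f a ball around b of some
   radius e is mapped into V.
   Using the covering B ⊆ ⋃ h_i(B) backwards from b, we build an itinerary
   s and points c_n in B with h_{s_0} ∘ ... ∘ h_{s_{n-1}} (c_n) = b; hence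
   each composed image meets B at b, so by hypothesis its diameter tends to
   0 and some composition H = h_{s_0} ∘ ... ∘ h_{s_N} has diam H(B) < e.
   As X = O^-(B), x = g^{-1}(x0) for some g in <F>^+ and x0 in B, so
   H (g x) = H x0 lies within e of b = H c_{N+1}, and f ∘ H ∘ g maps x into V. *)

Section Semigroup.
Context {R : realType} {X : metricType R} {k : nat} {F : 'I_k -> X -> X}.

Lemma foldr_comp_start (T : Type) (g : T -> X -> X) (s : seq T) (a : X -> X) x :
  foldr (fun i f => g i \o f) a s x = foldr (fun i f => g i \o f) id s (a x).
Proof. by elim: s => //= i s ->. Qed.

Lemma compw_cat (w1 w2 : seq 'I_k) : compw F (w1 ++ w2) = compw F w1 \o compw F w2.
Proof. by apply/funext => x; rewrite /compw foldr_cat foldr_comp_start. Qed.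

Lemma semigroup_comp {f g : X -> X} :
  semigroup F f -> semigroup F g -> semigroup F (f \o g).
Proof.
case=> [w1 w1_nil ->] [w2 _ ->]; exists (w1 ++ w2); last by rewrite compw_cat.
by case: w1 w1_nil.
Qed.

Lemma semigroup_continuous (f : X -> X) :
  (forall i, continuous (F i)) -> semigroup F f -> continuous f.
Proof.
move=> Fc [w _ ->]; elim: w => [|i w IH] x /=; first exact: cvg_id.
exact: continuous_comp (IH x) (Fc i _).
Qed.

Lemma hcompS (h : nat -> X -> X) (s : nat -> nat) n :
  hcomp h s n.+1 = hcomp h s n \o h (s n).
Proof.
by apply/funext => x; rewrite /hcomp -addn1 iotaD foldr_cat foldr_comp_start.
Qed.

Lemma semigroup_hcomp {h : nat -> X -> X} (s : nat -> nat) {n : nat} :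
  (forall i, semigroup F (h i)) -> (0 < n)%N -> semigroup F (hcomp h s n).
Proof.
move=> hS; elim: n => // -[_ _|n IH _]; rewrite hcompS; first exact: hS.
exact: semigroup_comp (IH _) (hS _).
Qed.

End Semigroup.

Section Approximation.
Context {R : realType} {X : metricType R}.

Lemma mdist_le_diam (A : set X) x y :
  A x -> A y -> ((mdist x y)%:E <= diam A)%E.
Proof. by move=> Ax Ay; apply: ereal_sup_ubound; exists x => //; exists y. Qed.

Variables (B : set X) (h : nat -> X -> X).
Hypothesis B_cover : B `<=` \bigcup_i (h i @` B).

Lemma backward_itinerary b : B b ->
  exists (s : nat -> nat) (c : nat -> X),
    forall n, B (c n) /\ hcomp h s n (c n) = b.
Proof.
move=> Bb.
have pre z : exists p : nat * X, B z -> B p.2 /\ z = h p.1 p.2.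
  have [Bz|nBz] := pselect (B z); last by exists (0%N, z).
  by have [i _ [y By <-]] := B_cover _ Bz; exists (i, y).
have [pre' preP] := boolp.choice pre.
pose c n := iter n (fun z => (pre' z).2) b.
exists (fun n => (pre' (c n)).1); exists c; elim=> [//|n [Bcn IH]].
have [By Ez] := preP _ Bcn.
by split=> //; rewrite hcompS /= -Ez.
Qed.

Hypothesis diam_vanish : forall s : nat -> nat,
  (forall n, (0 < n)%N -> (hcomp h s n @` B) `&` B !=set0) ->
  (fun n => diam (hcomp h s n @` B)) @ \oo --> 0%E.

Lemma uniform_approximation b (e : R) : B b -> 0 < e ->
  exists s n, (0 < n)%N /\ forall y, B y -> mdist b (hcomp h s n y) < e.
Proof.
move=> Bb e0; have [s [c sc]] := backward_itinerary b Bb.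
have meetB n : (0 < n)%N -> (hcomp h s n @` B) `&` B !=set0.
  by move=> _; exists b; split=> //; exists (c n); case: (sc n).
have small : nbhs (0%E : \bar R) (fun u => u < e%:E)%E.
  by apply: open_ereal_lt'; rewrite lte_fin.
have [N _ HN] := diam_vanish s meetB _ small.
exists s, N.+1; split=> // y By; rewrite -lte_fin.
apply: le_lt_trans (HN _ (leqnSn N)); have [BcN <-] := sc N.+1.
by apply: mdist_le_diam; [exists (c N.+1) | exists y].
Qed.

End Approximation.

Theorem mainTheorem13 (R : realType) (X : metricType R) (k : nat)
  (F : 'I_k -> X -> X) (B : set X) (h : nat -> X -> X) :
  is_IFS F ->
  open B ->
  setT = closure (orbit_plus F B) ->
  setT = orbit_minus F B ->
  (forall i, semigroup F (h i)) ->
  B `<=` \bigcup_i (h i @` B) ->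
  (forall s : nat -> nat,
     (forall n, (0 < n)%N -> (hcomp h s n @` B) `&` B !=set0) ->
     (fun n => diam (hcomp h s n @` B)) @ \oo --> 0%E) ->
  minimal F.
Proof.
move=> IFS Bo dense_plus full_minus hS B_cover diam_vanish x.
have Fc i : continuous (F i) by case: (IFS i) => _ [g [_ _ ? _]].
apply/seteqP; split => // p _ U; rewrite nbhsE => -[V [Vo Vp] VU].
(* some f in <F>^+ sends a point b of B into V, and a ball around b too *)
have p_adh : closure (orbit_plus F B) p by rewrite -dense_plus.
have [_ [[f [fS [b Bb ->]]] Vfb]] := p_adh V (open_nbhs_nbhs (conj Vo Vp)).
have : nbhs b (B `&` f @^-1` V).
  apply: filterI; first exact: open_nbhs_nbhs.
  exact: semigroup_continuous Fc fS b V (open_nbhs_nbhs (conj Vo Vfb)).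
rewrite -metricType_numDomainType.filter_from_mdist_nbhs => -[e /= e0 ballV].
have [g [gS [x0 Bx0 gx]]] : orbit_minus F B x by rewrite -full_minus.
have [s [n [n0 close]]] := uniform_approximation _ _ B_cover diam_vanish _ _ Bb e0.
exists (f (hcomp h s n x0)); split; last exact/VU/(ballV _ (close _ Bx0)).2.
exists (f \o hcomp h s n \o g); split; last by exists x => //=; rewrite gx.
exact: semigroup_comp (semigroup_comp fS (semigroup_hcomp s hS n0)) gS.
Qed.
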